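(* Let $q$ be odd and let $\mathcal U$ be a conic-BM unital with respect to $\ell_\infty$ in $\mathrm{PG}(2,q^2)$. Then for every point $Q\notin\mathcal U\cup\ell_\infty$, $\mathrm{pedal}(Q)$ is an arc.
   Context: Points of $\mathrm{PG}(2,q^2)$ have homogeneous coordinates $(x,y,z)$; $\ell_\infty$ is the line $z=0$. For $\alpha,\beta\in\mathbb{F}_{q^2}$ with $(\beta^q-\beta)^2+4\alpha^{q+1}$ a nonsquare in $\mathbb{F}_q$, the set $\mathcal U_{\alpha\beta}=\{(x,\alpha x^2+\beta x^{q+1}+r,1): x\in\mathbb{F}_{q^2}, r\in\mathbb{F}_q\}\cup\{(0,1,0)\}$ is an orthogonal Buekenhout–Metz unital with respect to $\ell_\infty$ (a set of $q^3+1$ points meeting every line in $1$ or $q+1$ points). A conic-BM unital with respect to $\ell_\infty$ is such a unital which contains a non-degenerate conic, equivalently one which is the union of $q$ non-degenerate conics pairwise meeting in the point $(0,1,0)$; up to a collineation fixing $\ell_\infty$ these are exactly the sets $\mathcal U_{\alpha\beta}$ with $\beta\in\mathbb{F}_q$. For a point $Q$ not on the unital, $\mathrm{pedal}(Q)$ is the set of points of contact of the $q+1$ tangent lines (lines meeting the unital in exactly one point) through $Q$. An arc is a set meeting every line in at most $2$ points. *)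

(* Projective plane PG(2,F) over a finite field F with |F| = q^2.
   Points: nonzero column vectors 'cV[F]_3 (homogeneous coordinates (x,y,z)),
   two vectors representing the same point iff proportional.
   Lines: nonzero row vectors l, incidence l *m v = 0.
   Point sets are predicates on vectors (only nonzero vectors are members). *)
From HB Require Import structures.
From mathcomp Require Import all_boot all_order all_algebra.
Set Implicit Arguments. Unset Strict Implicit. Unset Printing Implicit Defensive.
Import Order.TTheory GRing.Theory Num.Theory.
Local Open Scope ring_scope.

Section PG2.
Variable F : fieldType.

Definition pset := 'cV[F]_3 -> Prop.

Definition vec3 (x y z : F) : 'cV[F]_3 := \col_(i < 3) nth 0 [:: x; y; z] i.

Definition zc (v : 'cV[F]_3) : F := v (inord 2) 0.

Definition same_pt (u v : 'cV[F]_3) : Prop := exists2 k : F, k != 0 & u = k *: v.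

Definition on_line (l : 'rV[F]_3) (v : 'cV[F]_3) : Prop := l *m v = 0.

Definition inFq (q : nat) (x : F) : Prop := x ^+ q = x.

Definition nonsquare_Fq (q : nat) (d : F) : Prop :=
  inFq q d /\ ~ (exists y, inFq q y /\ y ^+ 2 = d).

Definition BMset (q : nat) (a b : F) : pset := fun v =>
  v != 0 /\
  ((exists x r, inFq q r /\
        same_pt v (vec3 x (a * x ^+ 2 + b * x ^+ q.+1 + r) 1))
   \/ same_pt v (vec3 0 1 0)).

Definition BM_cond (q : nat) (a b : F) : Prop :=
  nonsquare_Fq q ((b ^+ q - b) ^+ 2 + 4%:R * a ^+ q.+1).

Definition coll_image (A : 'M[F]_3) (s : {rmorphism F -> F}) (S : pset) : pset :=
  fun v => v != 0 /\ exists w, S w /\ same_pt v (A *m map_mx s w).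

Definition fixes_linf (A : 'M[F]_3) : Prop :=
  forall v, zc v = 0 -> zc (A *m v) = 0.

Definition orthBM (q : nat) (U : pset) : Prop :=
  exists (a b : F) (A : 'M[F]_3) (s : {rmorphism F -> F}),
    [/\ BM_cond q a b, A \in unitmx, fixes_linf A &
        forall v, U v <-> coll_image A s (BMset q a b) v].

Definition conic (M : 'M[F]_3) : pset := fun v => v != 0 /\ v^T *m M *m v = 0.

Definition nondeg_conic_in (U : pset) : Prop :=
  exists M : 'M[F]_3, [/\ M^T = M, \det M != 0 & forall v, conic M v -> U v].

Definition conicBM (q : nat) (U : pset) : Prop := orthBM q U /\ nondeg_conic_in U.

Definition tangent (U : pset) (l : 'rV[F]_3) : Prop :=
  l != 0 /\ exists v, [/\ U v, on_line l v &
                          forall w, U w -> on_line l w -> same_pt w v].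

Definition pedal (U : pset) (Q : 'cV[F]_3) : pset := fun P =>
  U P /\ exists l, [/\ tangent U l, on_line l Q & on_line l P].

Definition is_arc (S : pset) : Prop :=
  forall (l : 'rV[F]_3) u v w, l != 0 -> S u -> S v -> S w ->
    on_line l u -> on_line l v -> on_line l w ->
    [\/ same_pt u v, same_pt v w | same_pt u w].

End PG2.

(* After a collineation fixing l_inf, U = U_{alpha beta}. The tangent line of U at an
   affine point (x, y) has slope 2 alpha x + (beta - beta^q) x^q (any other line through (x, y)
   meets U again). A non-degenerate conic inside U must be tangent to U at each of its affine
   points, which forces it to be a parabola with vertical axis and beta to lie in F_q. Then the
   tangent at (x1, y1) has slope 2 alpha x1, so the tangents through an affine point (x0, y0)
   touch U on the parabola y = 2 alpha x^2 - 2 alpha x0 x + y0, which is an arc. *)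

From HB Require Import structures.
From mathcomp Require Import all_boot all_order all_algebra all_fingroup all_solvable all_field.
From mathcomp Require Import ring zify.
Set Implicit Arguments. Unset Strict Implicit. Unset Printing Implicit Defensive.
Import Order.TTheory GRing.Theory Num.Theory.
Local Open Scope ring_scope.

Lemma inFq1 (F : fieldType) (q : nat) : inFq q (1 : F).
Proof. exact: expr1n. Qed.

Lemma inFqM (F : fieldType) (q : nat) (x y : F) : inFq q x -> inFq q y -> inFq q (x * y).
Proof. by rewrite /inFq exprMn => -> ->. Qed.

Section FrobeniusQ.
Variables (F : finFieldType) (q : nat).
Hypothesis cardF : #|F| = (q ^ 2)%N.

Lemma pchar_nat_q : [pchar F].-nat q.
Proof.
have [p _ pF] := finPcharP F.
have : p.-nat #|F| by rewrite -cardsT; exact: abelem_pgroup (fin_ring_pchar_abelem pF).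
rewrite cardF expnS expn1 pnatM => /andP[pq _].
by rewrite (eq_pnat _ (pcharf_eq pF)).
Qed.

Lemma q_gt1 : (1 < q)%N.
Proof. by have := finNzRing_gt1 F; rewrite cardF; case: q => [|[|n]]. Qed.

Lemma exprqD (x y : F) : (x + y) ^+ q = x ^+ q + y ^+ q.
Proof. exact: exprDn_pchar pchar_nat_q. Qed.

Lemma exprqK (x : F) : (x ^+ q) ^+ q = x.
Proof. by rewrite -exprM -[(q * q)%N]/((q ^ 2)%N) -cardF expf_card. Qed.

Lemma exprq0 : (0 : F) ^+ q = 0.
Proof. by rewrite expr0n; case: q q_gt1. Qed.

Lemma exprq_nat (n : nat) : (n%:R : F) ^+ q = n%:R.
Proof. by elim: n => [|n IHn]; rewrite ?exprq0 // -addn1 natrD exprqD IHn expr1n. Qed.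

Lemma inFq0 : inFq q (0 : F).
Proof. exact: exprq0. Qed.

Lemma inFqD (x y : F) : inFq q x -> inFq q y -> inFq q (x + y).
Proof. by rewrite /inFq exprqD => -> ->. Qed.

Lemma inFq_norm (x : F) : inFq q (x ^+ q.+1).
Proof. by rewrite /inFq exprS exprMn exprqK mulrC. Qed.

Hypothesis q_odd : odd q.

Lemma exprqN (x : F) : (- x) ^+ q = - x ^+ q.
Proof. by rewrite -mulN1r exprMn -signr_odd q_odd mulN1r. Qed.

Lemma exprqB (x y : F) : (x - y) ^+ q = x ^+ q - y ^+ q.
Proof. by rewrite exprqD exprqN. Qed.

Lemma inFqB (x y : F) : inFq q x -> inFq q y -> inFq q (x - y).
Proof. by rewrite /inFq exprqB => -> ->. Qed.

Lemma two_neq0 : (2%:R : F) != 0.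
Proof.
apply: contraTneq q_odd => F2.
have pF2 : (2%N \in [pchar F]) by rewrite inE /= F2 eqxx.
have := pnatPpi pchar_nat_q (etrans (pi_pdiv q) q_gt1).
rewrite (pcharf_eq pF2) inE => /eqP pdiv2.
by rewrite -dvdn2 -pdiv2 pdiv_dvd.
Qed.

End FrobeniusQ.

Lemma exists_notin_Fq (F : finFieldType) (q : nat) :
  (1 < q)%N -> (q < #|F|)%N -> exists x : F, x ^+ q != x.
Proof.
move=> q_gt1 q_ltF; apply/existsP; rewrite -negb_forall; apply/negP => /forallP allFq.
pose p : {poly F} := 'X^q - 'X.
have size_p : size p = q.+1 by rewrite size_polyDl ?size_polyXn // size_polyN size_polyX.
have p_neq0 : p != 0 by rewrite -size_poly_eq0 size_p.
suff : (#|F| <= q)%N by rewrite leqNgt q_ltF.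
rewrite cardE -ltnS -size_p; apply: max_poly_roots p_neq0 _ (enum_uniq F).
by apply/allP => x _; rewrite /root !hornerE (eqP (allFq x)) subrr.
Qed.

Section Squares.
Variable F : finFieldType.

Lemma card_sqrt_le2 (y : F) : (#|[set x : F | x ^+ 2 == y]| <= 2)%N.
Proof.
pose p : {poly F} := 'X^2 - y%:P.
have size_p : size p = 3%N.
  by rewrite size_polyDl ?size_polyXn // size_polyN size_polyC; case: (y != 0).
have p_neq0 : p != 0 by rewrite -size_poly_eq0 size_p.
rewrite cardE -ltnS -size_p; apply: max_poly_roots p_neq0 _ (enum_uniq _).
apply/allP => x; rewrite mem_enum inE => /eqP x2.
by rewrite /root !hornerE x2 subrr.
Qed.

Definition squares : {set F} := [set x ^+ 2 | x : F].

(* Every nonzero square has at most two square roots and 0 has only one. *)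
Lemma card_squares_gt_half : (#|F| < 2 * #|squares|)%N.
Proof.
have squares0 : (0 : F) \in squares by apply/imsetP; exists 0; rewrite ?inE // expr0n.
rewrite -cardsT -sum1_card (partition_big_imset (fun x : F => x ^+ 2)) /=.
have -> : (fun x : F => x ^+ 2) @: [set: F] = squares.
  by apply/setP => z; apply/imsetP/imsetP => -[x _ ->]; exists x.
rewrite (bigD1 (0 : F)) //= (cardD1 (0 : F)) squares0.
have -> : (\sum_(x in [set: F] | (x ^+ 2 == 0)%R) 1 = 1)%N.
  rewrite (eq_bigl (pred1 (0 : F))) ?big_pred1_eq // => x.
  by rewrite inE /= expf_eq0 /=; case: (x == 0).
set nz := [predD1 squares & 0].
have fibres : (\sum_(y in squares | (y != 0)%R) \sum_(x in [set: F] | x ^+ 2 == y) 1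
               <= #|nz| * 2)%N.
  rewrite -sum_nat_const (eq_bigl (fun y => y \in nz)) => [|y]; last by rewrite !inE andbC.
  apply: leq_sum => y _; rewrite sum1_card.
  apply: leq_trans (card_sqrt_le2 y); apply: subset_leq_card.
  by apply/subsetP => x; rewrite !inE /= => /andP[].
apply: leq_ltn_trans (leq_add (leqnn 1) fibres) _; lia.
Qed.

Lemma exists_sqr_affine (l k : F) : l != 0 -> exists s w, l * s ^+ 2 + k = w ^+ 2.
Proof.
move=> l_neq0.
pose S1 : {set F} := [set l * y + k | y in squares].
have card_S1 : #|S1| = #|squares| by apply: card_imset => y z /addIr /(mulfI l_neq0).
have le_card : (#|S1 :|: squares| <= #|F|)%N := max_card _.
rewrite cardsU card_S1 in le_card.
have : (0 < #|S1 :&: squares|)%N by have := card_squares_gt_half; lia.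
case/card_gt0P => _ /setIP[/imsetP[_ /imsetP[s _ ->] ->] /imsetP[w _ sw]].
by exists s, w.
Qed.

End Squares.

Section Coordinates.
Variable F : fieldType.
Implicit Types (x y z : F) (l : 'rV[F]_3) (u v w : 'cV[F]_3).

Definition i0 : 'I_3 := inord 0.
Definition i1 : 'I_3 := inord 1.
Definition i2 : 'I_3 := inord 2.

Lemma ord3P (i : 'I_3) : [\/ i = i0, i = i1 | i = i2].
Proof.
case: i => [[|[|[|n]]] lt_i3] //; [constructor 1 | constructor 2 | constructor 3];
  by apply/val_inj; rewrite /= inordK.
Qed.

Lemma vec3E0 x y z : vec3 x y z i0 0 = x. Proof. by rewrite mxE inordK. Qed.
Lemma vec3E1 x y z : vec3 x y z i1 0 = y. Proof. by rewrite mxE inordK. Qed.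
Lemma vec3E2 x y z : vec3 x y z i2 0 = z. Proof. by rewrite mxE inordK. Qed.

Lemma vec3P u v : u i0 0 = v i0 0 -> u i1 0 = v i1 0 -> u i2 0 = v i2 0 -> u = v.
Proof.
by move=> e0 e1 e2; apply/matrixP => i j; rewrite (ord1 j); case: (ord3P i) => ->.
Qed.

Lemma vec3_eta v : v = vec3 (v i0 0) (v i1 0) (v i2 0).
Proof. by apply: vec3P; rewrite ?vec3E0 ?vec3E1 ?vec3E2. Qed.

Lemma vec3_inj x y z x' y' z' :
  vec3 x y z = vec3 x' y' z' -> [/\ x = x', y = y' & z = z'].
Proof.
by move=> e; split; [rewrite -(vec3E0 x y z) | rewrite -(vec3E1 x y z) | rewrite -(vec3E2 x y z)];
  rewrite e ?vec3E0 ?vec3E1 ?vec3E2.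
Qed.

Lemma scale_vec3 k x y z : k *: vec3 x y z = vec3 (k * x) (k * y) (k * z).
Proof. by apply: vec3P; rewrite mxE ?vec3E0 ?vec3E1 ?vec3E2. Qed.

Lemma vec3_eq0 x y z : (vec3 x y z == 0) = [&& x == 0, y == 0 & z == 0].
Proof.
apply/eqP/and3P => [e | [/eqP-> /eqP-> /eqP->]].
  by move: (vec3E0 x y z) (vec3E1 x y z) (vec3E2 x y z); rewrite e !mxE => <- <- <-.
by apply: vec3P; rewrite ?vec3E0 ?vec3E1 ?vec3E2 mxE.
Qed.

Lemma vec3_aff_neq0 x y : vec3 x y 1 != 0.
Proof. by rewrite vec3_eq0 oner_eq0 !andbF. Qed.

Lemma sum_ord3 (f : 'I_3 -> F) : \sum_(i < 3) f i = f i0 + f i1 + f i2.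
Proof.
rewrite !big_ord_recr big_ord0 /= add0r.
by congr (f _ + f _ + f _); apply/val_inj; rewrite /= inordK.
Qed.

Lemma mulmx_vec3 (M : 'M[F]_3) x y z :
  M *m vec3 x y z = vec3 (M i0 i0 * x + M i0 i1 * y + M i0 i2 * z)
                         (M i1 i0 * x + M i1 i1 * y + M i1 i2 * z)
                         (M i2 i0 * x + M i2 i1 * y + M i2 i2 * z).
Proof.
by apply: vec3P; rewrite mxE sum_ord3 !vec3E0 !vec3E1 !vec3E2.
Qed.

Lemma on_line_vec3 l x y z :
  on_line l (vec3 x y z) <-> l 0 i0 * x + l 0 i1 * y + l 0 i2 * z = 0.
Proof.
have e : (l *m vec3 x y z) 0 0 = l 0 i0 * x + l 0 i1 * y + l 0 i2 * z.
  by rewrite mxE sum_ord3 vec3E0 vec3E1 vec3E2.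
split => [/matrixP/(_ 0 0) | l_xyz]; first by rewrite e mxE.
by apply/matrixP => i j; rewrite (ord1 i) (ord1 j) e l_xyz mxE.
Qed.

Lemma row3_eq0 l : l 0 i0 = 0 -> l 0 i1 = 0 -> l 0 i2 = 0 -> l = 0.
Proof.
by move=> e0 e1 e2; apply/matrixP => i j; rewrite (ord1 i) mxE; case: (ord3P j) => ->.
Qed.

Definition qform (M : 'M[F]_3) x y z :=
  x * (M i0 i0 * x + M i0 i1 * y + M i0 i2 * z) +
  y * (M i1 i0 * x + M i1 i1 * y + M i1 i2 * z) +
  z * (M i2 i0 * x + M i2 i1 * y + M i2 i2 * z).

Lemma conic_vec3 (M : 'M[F]_3) x y z :
  conic M (vec3 x y z) <-> vec3 x y z != 0 /\ qform M x y z = 0.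
Proof.
have e : ((vec3 x y z)^T *m M *m vec3 x y z) 0 0 = qform M x y z.
  rewrite -mulmxA mulmx_vec3 mxE sum_ord3 ![(vec3 x y z)^T _ _]mxE.
  by rewrite !vec3E0 !vec3E1 !vec3E2 /qform; ring.
rewrite /conic; split=> -[nz0 Q0]; split=> //.
  by move/matrixP: Q0 => /(_ 0 0); rewrite e mxE.
by apply/matrixP => i j; rewrite (ord1 i) (ord1 j) e Q0 mxE.
Qed.

End Coordinates.

Section ProjectivePoints.
Variable F : fieldType.
Implicit Types (x y : F) (u v w : 'cV[F]_3).

Lemma same_pt_refl v : same_pt v v.
Proof. by exists 1; rewrite ?oner_eq0 ?scale1r. Qed.

Lemma same_pt_sym u v : same_pt u v -> same_pt v u.
Proof. by case=> k k0 ->; exists k^-1; rewrite ?invr_eq0 // scalerA mulVf // scale1r. Qed.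

Lemma same_pt_trans u v w : same_pt u v -> same_pt v w -> same_pt u w.
Proof. by case=> k k0 -> [k' k0' ->]; exists (k * k'); rewrite ?mulf_neq0 ?scalerA. Qed.

Lemma same_pt_neq0 u v : same_pt u v -> v != 0 -> u != 0.
Proof. by case=> k k0 -> v0; rewrite scaler_eq0 negb_or k0. Qed.

Lemma same_pt_aff x y x' y' :
  same_pt (vec3 x y 1) (vec3 x' y' 1) -> x = x' /\ y = y'.
Proof.
by case=> k _; rewrite scale_vec3 => /vec3_inj[-> ->]; rewrite mulr1 => <-; rewrite !mul1r.
Qed.

Lemma same_pt_inf x y z : same_pt (vec3 x y z) (vec3 0 1 0) -> x = 0 /\ z = 0.
Proof. by case=> k _; rewrite scale_vec3 => /vec3_inj[-> _ ->]; rewrite !mulr0. Qed.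

Lemma same_pt_normalize v : v i2 0 != 0 ->
  same_pt v (vec3 (v i0 0 / v i2 0) (v i1 0 / v i2 0) 1).
Proof.
move=> z0; exists (v i2 0) => //.
by rewrite scale_vec3 mulr1 ![v i2 0 * _]mulrC !divfK // -vec3_eta.
Qed.

Lemma same_pt_on_line (l : 'rV[F]_3) u v : same_pt u v -> on_line l v -> on_line l u.
Proof. by case=> k _ -> lv; rewrite /on_line -scalemxAr lv scaler0. Qed.

Lemma pedal_same_pt (S : pset F) (Q1 Q2 P : 'cV[F]_3) :
  same_pt Q1 Q2 -> pedal S Q2 P -> pedal S Q1 P.
Proof.
move=> sQ [SP [l [tl lQ lP]]]; split => //; exists l; split => //.
exact: same_pt_on_line sQ lQ.
Qed.

Lemma is_arc_sub (S1 S2 : pset F) : (forall P, S1 P -> S2 P) -> is_arc S2 -> is_arc S1.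
Proof. by move=> S12 arc2 l u v w l0 /S12 Su /S12 Sv /S12 Sw; apply: arc2. Qed.

Definition parabola (c d e : F) : pset F :=
  fun P => exists x, same_pt P (vec3 x (c * x ^+ 2 + d * x + e) 1).

Lemma parabola_chord (c d e L0 L1 L2 x1 x2 : F) : x1 != x2 ->
  L0 * x1 + L1 * (c * x1 ^+ 2 + d * x1 + e) + L2 = 0 ->
  L0 * x2 + L1 * (c * x2 ^+ 2 + d * x2 + e) + L2 = 0 ->
  L0 + L1 * (c * (x1 + x2) + d) = 0.
Proof.
move=> x12 E1 E2.
have diff12 : (x1 - x2) * (L0 + L1 * (c * (x1 + x2) + d)) =
         (L0 * x1 + L1 * (c * x1 ^+ 2 + d * x1 + e) + L2) -
         (L0 * x2 + L1 * (c * x2 ^+ 2 + d * x2 + e) + L2) by ring.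
by move: diff12; rewrite E1 E2 subrr => /eqP; rewrite mulf_eq0 subr_eq0 (negPf x12) => /eqP.
Qed.

Lemma is_arc_parabola (c d e : F) : c != 0 -> is_arc (parabola c d e).
Proof.
move=> c0 l u v w l0 [x1 su] [x2 sv] [x3 sw] lu lv lw.
have [e12 | n12] := eqVneq x1 x2.
  by constructor 1; rewrite e12 in su; exact: same_pt_trans su (same_pt_sym sv).
have [e23 | n23] := eqVneq x2 x3.
  by constructor 2; rewrite e23 in sv; exact: same_pt_trans sv (same_pt_sym sw).
have [e13 | n13] := eqVneq x1 x3.
  by constructor 3; rewrite e13 in su; exact: same_pt_trans su (same_pt_sym sw).
exfalso; move/eqP: l0; apply.
have on_l x P : same_pt P (vec3 x (c * x ^+ 2 + d * x + e) 1) -> on_line l P ->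
    l 0 i0 * x + l 0 i1 * (c * x ^+ 2 + d * x + e) + l 0 i2 = 0.
  by move=> sP /(same_pt_on_line (same_pt_sym sP))/on_line_vec3; rewrite mulr1.
have E1 := on_l _ _ su lu; have E2 := on_l _ _ sv lv; have E3 := on_l _ _ sw lw.
have K12 := parabola_chord n12 E1 E2; have K13 := parabola_chord n13 E1 E3.
have L1_0 : l 0 i1 = 0.
  have e23 : l 0 i1 * c * (x2 - x3) =
      (l 0 i0 + l 0 i1 * (c * (x1 + x2) + d)) - (l 0 i0 + l 0 i1 * (c * (x1 + x3) + d)).
    by ring.
  move: e23; rewrite K12 K13 subrr => /eqP.
  by rewrite !mulf_eq0 subr_eq0 (negPf n23) (negPf c0) !orbF => /eqP.
have L0_0 : l 0 i0 = 0 by move: K12; rewrite L1_0 mul0r addr0.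
by apply: row3_eq0 => //; move: E1; rewrite L0_0 L1_0 !mul0r !add0r.
Qed.

End ProjectivePoints.

Section BMPoints.
Variables (F : fieldType) (q : nat) (a b : F).
Local Notation U := (BMset q a b).

Definition inBM (x y : F) := inFq q (y - a * x ^+ 2 - b * x ^+ q.+1).

Lemma inBM_shift x r : inBM x (a * x ^+ 2 + b * x ^+ q.+1 + r) <-> inFq q r.
Proof.
by rewrite /inBM; have -> : a * x ^+ 2 + b * x ^+ q.+1 + r - a * x ^+ 2 - b * x ^+ q.+1 = r by ring.
Qed.

Lemma BMset_aff x y : U (vec3 x y 1) <-> inBM x y.
Proof.
split.
  case=> _ [[x' [r [Fr /same_pt_aff[-> ->]]]] | /same_pt_inf[_ /eqP]]; last by rewrite oner_eq0.
  exact/inBM_shift.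
move=> Fxy; split; first exact: vec3_aff_neq0.
left; exists x, (y - a * x ^+ 2 - b * x ^+ q.+1); split => //.
have -> : a * x ^+ 2 + b * x ^+ q.+1 + (y - a * x ^+ 2 - b * x ^+ q.+1) = y by ring.
exact: same_pt_refl.
Qed.

Lemma BMset_same_pt u v : same_pt u v -> U v -> U u.
Proof.
move=> suv [v0 [[x [r [Fr svx]]] | sv_inf]]; split; first exact: same_pt_neq0 suv v0.
- by left; exists x, r; split => //; apply: same_pt_trans suv svx.
- exact: same_pt_neq0 suv v0.
- by right; apply: same_pt_trans suv sv_inf.
Qed.

Lemma BMset_cases v : U v ->
  (exists x y, inBM x y /\ same_pt v (vec3 x y 1)) \/ same_pt v (vec3 0 1 0).
Proof.
case=> _ [[x [r [Fr sv]]] | sv]; last by right.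
by left; exists x, (a * x ^+ 2 + b * x ^+ q.+1 + r); split => //; apply/inBM_shift.
Qed.

Lemma BMset_inf x y : U (vec3 x y 0) -> x = 0.
Proof.
case/BMset_cases => [[x' [y' [_ [k k0]]]] | /same_pt_inf[] //].
by rewrite scale_vec3 mulr1 => /vec3_inj[_ _ k_eq0]; rewrite k_eq0 eqxx in k0.
Qed.

End BMPoints.

Section BMTangents.
Variables (F : finFieldType) (q : nat) (a b : F).
Hypotheses (cardF : #|F| = (q ^ 2)%N) (q_odd : odd q) (BMc : BM_cond q a b).

Lemma BM_cond_a_neq0 : b ^+ q = b -> a != 0.
Proof.
move=> b_Fq; apply/eqP => a0; case: BMc => _; apply; exists 0; split; first exact: inFq0 cardF.
by rewrite a0 b_Fq subrr expr0n /= expr0n /= mulr0 addr0.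
Qed.

Definition tslope x := 2%:R * a * x + (b - b ^+ q) * x ^+ q.

(* If the form vanished at t != 0, the discriminant of BM_cond would be the square of
   (w + w^q) / t^(q+1) with w := a t^2. *)
Lemma BM_cond_form_neq0 (t : F) : t != 0 ->
  a * t ^+ 2 - (a * t ^+ 2) ^+ q + (b - b ^+ q) * (t * t ^+ q) != 0.
Proof.
move=> t0; apply/eqP => form0; case: BMc => _; apply.
set w := a * t ^+ 2 in form0; set n := t * t ^+ q in form0.
have n0 : n != 0 by rewrite mulf_neq0 // expf_neq0.
have wq : w ^+ q = w + (b - b ^+ q) * n.
  by apply/eqP; rewrite -subr_eq0 -oppr_eq0 -form0; apply/eqP; ring.
have w_wq : w * w ^+ q = a * a ^+ q * n ^+ 2 by rewrite /w exprMn exprAC /n; ring.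
exists ((w + w ^+ q) / n); split.
  have Fn : n ^+ q = n by rewrite /n exprMn (exprqK cardF t) mulrC.
  have Fw : (w + w ^+ q) ^+ q = w + w ^+ q by rewrite (exprqD cardF) (exprqK cardF w) addrC.
  by rewrite /inFq exprMn exprVn Fw Fn.
apply: (mulIf (expf_neq0 2 n0)).
rewrite exprMn -mulrA -exprMn mulVf // expr1n mulr1 [a ^+ q.+1]exprS.
have -> : (w + w ^+ q) ^+ 2 = (w ^+ q - w) ^+ 2 + 4%:R * (w * w ^+ q) by ring.
by rewrite w_wq {1}wq; ring.
Qed.

(* g below lies in F_q, while g^q - g is the form of BM_cond_form_neq0 at t := x - x1. *)
Lemma inBM_tslope x1 y1 x y : inBM q a b x1 y1 -> inBM q a b x y ->
  y = y1 + tslope x1 * (x - x1) -> x = x1.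
Proof.
move=> U1 U2 y_def; apply/eqP; rewrite -subr_eq0; apply/negPn/negP => t0.
have [t x_def] : exists t, x = x1 + t by exists (x - x1); rewrite addrC subrK.
rewrite x_def addrC addKr in t0 y_def; subst x y.
pose g := tslope x1 * t - a * (2%:R * x1 * t + t ^+ 2)
          - b * (x1 ^+ q * t + x1 * t ^+ q + t * t ^+ q).
have Fg : inFq q g.
  have := inFqB cardF q_odd U2 U1; rewrite /inBM.
  suff -> : y1 + tslope x1 * t - a * (x1 + t) ^+ 2 - b * (x1 + t) ^+ q.+1
            - (y1 - a * x1 ^+ 2 - b * x1 ^+ q.+1) = g by [].
  by rewrite /g [(x1 + t) ^+ q.+1]exprS [x1 ^+ q.+1]exprS (exprqD cardF); ring.
have := BM_cond_form_neq0 t0.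
have -> : a * t ^+ 2 - (a * t ^+ 2) ^+ q + (b - b ^+ q) * (t * t ^+ q) = g ^+ q - g.
  rewrite /g /tslope.
  rewrite !(exprqB cardF q_odd, exprqD cardF, exprMn, exprq_nat cardF, exprqK cardF, exprAC).
  ring.
by rewrite Fg subrr eqxx.
Qed.

End BMTangents.

Section ConicInBM.
Variables (F : finFieldType) (q : nat) (a b : F) (M : 'M[F]_3).
Hypotheses (cardF : #|F| = (q ^ 2)%N) (q_odd : odd q) (BMc : BM_cond q a b).
Hypotheses (M_sym : M^T = M) (M_det : \det M != 0).
Hypothesis M_in_U : forall w, conic M w -> BMset q a b w.

Local Notation p00 := (M i0 i0).
Local Notation p01 := (M i0 i1).
Local Notation p02 := (M i0 i2).
Local Notation p11 := (M i1 i1).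
Local Notation p12 := (M i1 i2).
Local Notation p22 := (M i2 i2).

Definition aff_form x y :=
  p00 * x ^+ 2 + 2%:R * p01 * x * y + p11 * y ^+ 2 + 2%:R * p02 * x + 2%:R * p12 * y + p22.
Definition grad_x x y := p00 * x + p01 * y + p02.
Definition grad_y x y := p01 * x + p11 * y + p12.
Definition dir_form k := p00 + 2%:R * p01 * k + p11 * k ^+ 2.

Lemma M_symE i j : M j i = M i j.
Proof. by rewrite -[in RHS]M_sym mxE. Qed.

Lemma mulM_vec3 x y z : M *m vec3 x y z =
  vec3 (p00 * x + p01 * y + p02 * z) (p01 * x + p11 * y + p12 * z) (p02 * x + p12 * y + p22 * z).
Proof. by rewrite mulmx_vec3 (M_symE i0 i1) (M_symE i0 i2) (M_symE i1 i2). Qed.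

Lemma qform_sym x y z : qform M x y z =
  p00 * x ^+ 2 + 2%:R * p01 * x * y + p11 * y ^+ 2 +
  2%:R * p02 * x * z + 2%:R * p12 * y * z + p22 * z ^+ 2.
Proof. by rewrite /qform (M_symE i0 i1) (M_symE i0 i2) (M_symE i1 i2); ring. Qed.

Lemma M_ker (v : 'cV[F]_3) : M *m v = 0 -> v = 0.
Proof.
have Mu : M \in unitmx by rewrite unitmxE unitfE.
by move=> Mv0; rewrite -(mulKmx Mu v) Mv0 mulmx0.
Qed.

Lemma aff_form_chord x y k t : aff_form (x + t) (y + k * t) =
  aff_form x y + t * (2%:R * (grad_x x y + k * grad_y x y) + t * dir_form k).
Proof. by rewrite /aff_form /grad_x /grad_y /dir_form; ring. Qed.

Lemma dir_form_neq0 k : dir_form k != 0.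
Proof.
apply/eqP => dir0.
have /M_in_U/BMset_inf/eqP : conic M (vec3 1 k 0).
  apply/conic_vec3; rewrite vec3_eq0 oner_eq0 qform_sym -[RHS]dir0 /dir_form.
  by split => //; ring.
by rewrite oner_eq0.
Qed.

Lemma aff_form_inBM x y : aff_form x y = 0 -> inBM q a b x y.
Proof.
move=> aff0; apply/BMset_aff/M_in_U/conic_vec3; split; first exact: vec3_aff_neq0.
by rewrite qform_sym -[RHS]aff0 /aff_form; ring.
Qed.

Definition chord_step x y k := - (2%:R * (grad_x x y + k * grad_y x y)) / dir_form k.

Lemma aff_form_chord_step x y k : aff_form x y = 0 ->
  aff_form (x + chord_step x y k) (y + k * chord_step x y k) = 0.
Proof.
move=> aff0; rewrite aff_form_chord aff0 add0r /chord_step.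
have := dir_form_neq0 k; set d := dir_form k => d0.
by apply/eqP; rewrite mulf_eq0; apply/orP; right; apply/eqP; field.
Qed.

Lemma conic_tslope x y : aff_form x y = 0 -> grad_x x y + tslope q a b x * grad_y x y = 0.
Proof.
move=> aff0; set k := tslope q a b x; set t := chord_step x y k.
have y_def : y + k * t = y + tslope q a b x * (x + t - x) by rewrite addrAC subrr add0r.
have U2 := aff_form_inBM (aff_form_chord_step k aff0).
move: (inBM_tslope cardF q_odd BMc (aff_form_inBM aff0) U2 y_def).
move/(canRL (addKr x))/eqP; rewrite addNr /t /chord_step mulf_eq0 invr_eq0.
rewrite (negPf (dir_form_neq0 k)) orbF oppr_eq0 mulf_eq0 (negPf (two_neq0 cardF q_odd)).
by move/eqP.
Qed.

Lemma grad_neq0 x y : aff_form x y = 0 -> exists k, grad_x x y + k * grad_y x y != 0.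
Proof.
move=> aff0.
have [gx0 | gx0] := eqVneq (grad_x x y) 0; last by exists 0; rewrite mul0r addr0.
exists 1; rewrite gx0 add0r mul1r; apply/eqP => gy0.
have gz0 : p02 * x + p12 * y + p22 = 0.
  have -> : p02 * x + p12 * y + p22 = aff_form x y - x * grad_x x y - y * grad_y x y.
    by rewrite /aff_form /grad_x /grad_y; ring.
  by rewrite aff0 gx0 gy0 !mulr0 !subr0.
move/eqP: (vec3_aff_neq0 x y); apply; apply: M_ker.
rewrite mulM_vec3 !mulr1 -/(grad_x x y) -/(grad_y x y) gx0 gy0 gz0.
by apply/eqP; rewrite vec3_eq0 eqxx.
Qed.

Lemma chord_step_neq0 x y k : grad_x x y + k * grad_y x y != 0 -> chord_step x y k != 0.
Proof.
move=> g0; rewrite /chord_step mulf_neq0 ?invr_eq0 ?dir_form_neq0 //.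
by rewrite oppr_eq0 mulf_neq0 // (two_neq0 cardF q_odd).
Qed.

Section CentralConic.
Hypothesis p11_neq0 : p11 != 0.

Lemma disc_neq0 : p01 ^+ 2 - p11 * p00 != 0.
Proof.
apply: contraNneq (dir_form_neq0 (- p01 / p11)) => disc0.
have -> : dir_form (- p01 / p11) = - (p01 ^+ 2 - p11 * p00) / p11 by rewrite /dir_form; field.
by rewrite disc0 oppr0 mul0r.
Qed.

(* Average the tangent conditions at the two points of the conic with abscissa x. *)
Lemma aff_form_abscissa x y : aff_form x y = 0 ->
  (p11 * p00 - p01 ^+ 2) * x + (p11 * p02 - p01 * p12) = 0.
Proof.
move=> aff0; pose y' := - (2%:R * (p01 * x + p12)) / p11 - y.
have aff0' : aff_form x y' = 0 by rewrite -[RHS]aff0 /aff_form /y'; field.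
have := conic_tslope aff0; have := conic_tslope aff0'.
set m := tslope q a b x => T' T.
have -> : (p11 * p00 - p01 ^+ 2) * x + (p11 * p02 - p01 * p12) =
    p11 / 2%:R * ((grad_x x y + m * grad_y x y) + (grad_x x y' + m * grad_y x y')).
  by rewrite /grad_x /grad_y /y'; field; rewrite p11_neq0 (two_neq0 cardF q_odd).
by rewrite T T' addr0 mulr0.
Qed.

(* Completing the square, p11 * aff_form x y = (p11 y + p01 x + p12)^2 - (lam x^2 + 2 mu x + nu),
   and lam x^2 + 2 mu x + nu = lam (x + mu / lam)^2 + nu - mu^2 / lam. *)
Lemma exists_aff_form_root : exists x y, aff_form x y = 0.
Proof.
set lam := p01 ^+ 2 - p11 * p00; set mu := p01 * p12 - p11 * p02.
set nu := p12 ^+ 2 - p11 * p22.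
have [s [w sw]] := exists_sqr_affine (nu - mu ^+ 2 / lam) disc_neq0.
pose x := s - mu / lam; exists x, ((w - p01 * x - p12) / p11).
have -> : aff_form x ((w - p01 * x - p12) / p11) =
    (w ^+ 2 - (lam * s ^+ 2 + (nu - mu ^+ 2 / lam))) / p11.
  by rewrite /aff_form /x /lam /mu /nu; field; rewrite p11_neq0 disc_neq0.
by rewrite sw subrr mul0r.
Qed.

End CentralConic.

(* Otherwise all affine points of the conic have the same abscissa, yet a point of the conic and
   a secant through it exist. *)
Lemma p11_eq0 : p11 = 0.
Proof.
apply/eqP; apply: contraT => p11_neq0.
have [x [y aff0]] := exists_aff_form_root p11_neq0.
have [k gk] := grad_neq0 aff0.
set t := chord_step x y k.
have e1 := aff_form_abscissa p11_neq0 aff0.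
have e2 := aff_form_abscissa p11_neq0 (aff_form_chord_step k aff0).
have : - (p01 ^+ 2 - p11 * p00) * t = 0.
  by rewrite -[RHS](subrr 0) -{1}e2 -e1 -/t; ring.
move/eqP; rewrite mulf_eq0 oppr_eq0 (negPf (disc_neq0 p11_neq0)).
by rewrite (negPf (chord_step_neq0 gk)).
Qed.

Lemma p01_eq0 : p01 = 0.
Proof.
apply/eqP; apply: contraT => p01_neq0.
have := dir_form_neq0 (- p00 / (2%:R * p01)); rewrite /dir_form p11_eq0 mul0r addr0.
suff -> : p00 + 2%:R * p01 * (- p00 / (2%:R * p01)) = 0 by rewrite eqxx.
by field; rewrite p01_neq0 (two_neq0 cardF q_odd).
Qed.

Lemma p12_neq0 : p12 != 0.
Proof.
apply/eqP => p12_0.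
have /eqP : vec3 (0 : F) 1 0 = 0.
  apply: M_ker; rewrite mulM_vec3 p01_eq0 p11_eq0 p12_0 !mulr0 !mulr1 !addr0.
  by apply/eqP; rewrite vec3_eq0 eqxx.
by rewrite vec3_eq0 oner_eq0 andbF.
Qed.

Lemma parabola_tslope x : p00 * x + p02 + tslope q a b x * p12 = 0.
Proof.
pose y := - (p00 * x ^+ 2 + 2%:R * p02 * x + p22) / (2%:R * p12).
have aff0 : aff_form x y = 0.
  by rewrite /aff_form p01_eq0 p11_eq0 /y; field; rewrite p12_neq0 (two_neq0 cardF q_odd).
by have := conic_tslope aff0; rewrite /grad_x /grad_y p01_eq0 p11_eq0 !mul0r !addr0 add0r.
Qed.

(* Compare the tangent conditions at abscissae 0, 1 and some xi outside F_q. *)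
Lemma conic_in_BM_inFq : b ^+ q = b.
Proof.
have q_gt1 := q_gt1 cardF.
have [xi xi_notFq] : exists xi : F, xi ^+ q != xi.
  by apply: exists_notin_Fq; rewrite // cardF; nia.
have : (b - b ^+ q) * p12 * (xi ^+ q - xi) =
    (p00 * xi + p02 + tslope q a b xi * p12) - xi * (p00 * 1 + p02 + tslope q a b 1 * p12)
    + (xi - 1) * (p00 * 0 + p02 + tslope q a b 0 * p12).
  by rewrite /tslope (exprq0 cardF) expr1n; ring.
rewrite !parabola_tslope mulr0 subrr mulr0 addr0.
move/eqP; rewrite !mulf_eq0 (negPf p12_neq0) [xi ^+ q - xi == 0]subr_eq0 (negPf xi_notFq).
by rewrite !orbF subr_eq0 eq_sym => /eqP.
Qed.

End ConicInBM.

Section BMPedal.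
Variables (F : finFieldType) (q : nat) (a b : F).
Hypotheses (cardF : #|F| = (q ^ 2)%N) (q_odd : odd q).
Local Notation U := (BMset q a b).
Implicit Types (x y : F) (l : 'rV[F]_3) (v : 'cV[F]_3).

Lemma contact_aff_unique l v x y x' y' : (forall w, U w -> on_line l w -> same_pt w v) ->
  inBM q a b x y -> on_line l (vec3 x y 1) -> inBM q a b x' y' -> on_line l (vec3 x' y' 1) ->
  x = x' /\ y = y'.
Proof.
move=> contact U1 l1 U2 l2; apply: same_pt_aff.
exact: same_pt_trans (contact _ (proj2 (BMset_aff _ _ _ _ _) U1) l1)
                     (same_pt_sym (contact _ (proj2 (BMset_aff _ _ _ _ _) U2) l2)).
Qed.

(* A line through (0:1:0) and an affine point is vertical, and vertical lines are secants. *)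
Lemma tangent_inf_not_aff l v x0 y0 : (forall w, U w -> on_line l w -> same_pt w v) ->
  same_pt v (vec3 0 1 0) -> on_line l v -> ~ on_line l (vec3 x0 y0 1).
Proof.
move=> contact v_inf /(same_pt_on_line (same_pt_sym v_inf))/on_line_vec3.
rewrite !mulr0 mulr1 add0r addr0 => L1_0 /on_line_vec3; rewrite L1_0 mul0r addr0 mulr1 => l0.
have on_l y : on_line l (vec3 x0 y 1) by apply/on_line_vec3; rewrite L1_0 mul0r addr0 mulr1.
have U0 := proj2 (inBM_shift q a b x0 0) (inFq0 cardF).
have U1 := proj2 (inBM_shift q a b x0 1) (inFq1 F q).
have [_ /eqP] := contact_aff_unique contact U0 (on_l _) U1 (on_l _).
by rewrite addr0 -subr_eq0 opprD addrA subrr add0r oppr_eq0 oner_eq0.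
Qed.

Lemma inBM_vertical x y r : inFq q r -> inBM q a b x y -> inBM q a b x (y + r).
Proof.
move=> Fr Uxy; have := inFqD cardF Uxy Fr.
by have -> : y - a * x ^+ 2 - b * x ^+ q.+1 + r = y + r - a * x ^+ 2 - b * x ^+ q.+1 by ring.
Qed.

Section BetaInFq.
Hypotheses (a_neq0 : a != 0) (b_Fq : b ^+ q = b).

Lemma inBM_Fq x y : inBM q a b x y <-> inFq q (y - a * x ^+ 2).
Proof.
have Fn : inFq q (b * x ^+ q.+1) := inFqM b_Fq (inFq_norm cardF x).
split => [Uxy | Fxy].
  by have := inFqD cardF Uxy Fn; rewrite subrK.
by have Uxy := inFqB cardF q_odd Fxy Fn; exact Uxy.
Qed.

Lemma inBM_secant x y m : inBM q a b x y ->
  inBM q a b (x + (m - 2%:R * a * x) / a) (y + m * ((m - 2%:R * a * x) / a)).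
Proof.
move=> /inBM_Fq Fxy; apply/inBM_Fq.
suff -> : y + m * ((m - 2%:R * a * x) / a) - a * (x + (m - 2%:R * a * x) / a) ^+ 2 =
          y - a * x ^+ 2 by [].
by field.
Qed.

Lemma tangent_aff_slope l v x1 y1 : (forall w, U w -> on_line l w -> same_pt w v) ->
  same_pt v (vec3 x1 y1 1) -> inBM q a b x1 y1 -> on_line l v ->
  l 0 i1 != 0 /\ l 0 i0 = - (2%:R * a * x1) * l 0 i1.
Proof.
move=> contact v_aff U1 /(same_pt_on_line (same_pt_sym v_aff)) l1.
have l1E := l1; move/on_line_vec3: l1E; rewrite mulr1 => L1.
have L1_neq0 : l 0 i1 != 0.
  apply/eqP => L1_0; have on_vert : on_line l (vec3 x1 (y1 + 1) 1).
    by apply/on_line_vec3; move: L1; rewrite L1_0 !mul0r !addr0 mulr1.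
  have [_ /eqP] := contact_aff_unique contact U1 l1 (inBM_vertical (inFq1 F q) U1) on_vert.
  by rewrite -subr_eq0 opprD addrA subrr add0r oppr_eq0 oner_eq0.
split=> //; set m := - l 0 i0 / l 0 i1.
suff m_def : m = 2%:R * a * x1 by rewrite -m_def /m mulNr divfK // opprK.
apply/eqP; rewrite -subr_eq0; apply/eqP; set c := m - 2%:R * a * x1.
have on_sec : on_line l (vec3 (x1 + c / a) (y1 + m * (c / a)) 1).
  by apply/on_line_vec3; rewrite -[RHS]L1 /c /m mulr1; field; rewrite ?L1_neq0 ?a_neq0.
have [/eqP] := contact_aff_unique contact U1 l1 (inBM_secant m U1) on_sec.
rewrite -subr_eq0 opprD addrA subrr add0r oppr_eq0 mulf_eq0 invr_eq0 (negPf a_neq0) orbF.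
by move/eqP.
Qed.

Lemma pedal_BM_parabola x0 y0 P :
  pedal U (vec3 x0 y0 1) P -> parabola (2%:R * a) (- (2%:R * a * x0)) y0 P.
Proof.
case=> UP [l [[_ [v [Uv lv contact]]] lQ lP]].
have [[x1 [y1 [U1 v_aff]]] | v_inf] := BMset_cases Uv; last first.
  by case: (tangent_inf_not_aff contact v_inf lv lQ).
have [L1_neq0 L0E] := tangent_aff_slope contact v_aff U1 lv.
move/(same_pt_on_line (same_pt_sym v_aff))/on_line_vec3: lv; move/on_line_vec3: lQ.
rewrite !mulr1 L0E => lQ lv.
have y1E : y1 = 2%:R * a * x1 ^+ 2 + - (2%:R * a * x0) * x1 + y0.
  apply: (mulfI L1_neq0); apply/eqP; rewrite -subr_eq0 -(subrr 0) -{1}lv -lQ.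
  by apply/eqP; ring.
by exists x1; rewrite -y1E; exact: same_pt_trans (contact P UP lP) v_aff.
Qed.

Lemma pedal_BM_arc (Q : 'cV[F]_3) : Q i2 0 != 0 -> is_arc (pedal U Q).
Proof.
move=> zQ; have a2 : 2%:R * a != 0 by rewrite mulf_neq0 // (two_neq0 cardF q_odd).
apply: (@is_arc_sub _ _ _ _ (@is_arc_parabola _ _ _ _ a2)) => P.
move/(pedal_same_pt (same_pt_sym (same_pt_normalize zQ))); exact: pedal_BM_parabola.
Qed.

End BetaInFq.

End BMPedal.

Section Collineation.
Variables (F : fieldType) (A : 'M[F]_3) (s : {rmorphism F -> F}) (g : F -> F).
Hypotheses (gK : cancel g s) (A_unit : A \in unitmx).
Variables S U : pset F.
Hypotheses (S_neq0 : forall v, S v -> v != 0) (S_same_pt : forall u v, same_pt u v -> S v -> S u).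
Hypothesis U_S : forall v, U v <-> coll_image A s S v.
Implicit Types (k : F) (u v w : 'cV[F]_3) (l : 'rV[F]_3).

Definition coll w := A *m map_mx s w.
Definition coll_line l := map_mx g (l *m A).

Lemma map_mx_gK m n (X : 'M[F]_(m, n)) : map_mx s (map_mx g X) = X.
Proof. by apply/matrixP => i j; rewrite !mxE gK. Qed.

Lemma coll_inj : injective coll.
Proof. by move=> u v /(canLR (mulKmx A_unit)); rewrite mulKmx // => /map_mx_inj. Qed.

Lemma coll_eq0 w : (coll w == 0) = (w == 0).
Proof.
have coll0 : coll 0 = 0 by rewrite /coll map_mx0 mulmx0.
by rewrite -(inj_eq coll_inj) coll0.
Qed.

Lemma collZ k w : coll (k *: w) = s k *: coll w.
Proof. by rewrite /coll map_mxZ scalemxAr. Qed.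

Lemma same_pt_coll u v : same_pt (coll u) (coll v) <-> same_pt u v.
Proof.
split=> [[k k0 e] | [k k0 ->]]; last by exists (s k); rewrite ?fmorph_eq0 // collZ.
exists (g k); last by apply: coll_inj; rewrite collZ gK.
by apply: contraNneq k0 => gk0; rewrite -[k]gK gk0 rmorph0.
Qed.

Lemma U_coll w : U (coll w) <-> S w.
Proof.
rewrite U_S; split=> [[_ [w' [Sw' /same_pt_coll sw]]] | Sw]; first exact: S_same_pt sw Sw'.
split; first by rewrite coll_eq0 S_neq0.
by exists w; split => //; apply: same_pt_refl.
Qed.

Lemma U_collP v : U v -> exists2 w, S w & same_pt v (coll w).
Proof. by rewrite U_S => -[_ [w [Sw sv]]]; exists w. Qed.

Lemma on_line_coll l w : on_line l (coll w) <-> on_line (coll_line l) w.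
Proof.
rewrite /on_line /coll /coll_line mulmxA -[l *m A in LHS]map_mx_gK -map_mxM.
by split => [/eqP | ->]; rewrite ?map_mx0 // map_mx_eq0 => /eqP.
Qed.

Lemma coll_line_eq0 l : (coll_line l == 0) = (l == 0).
Proof.
rewrite /coll_line -(map_mx_eq0 s) map_mx_gK.
by apply/eqP/eqP => [lA0 | ->]; rewrite ?mul0mx // -(mulmxK A_unit l) lA0 mul0mx.
Qed.

Lemma tangent_coll l : tangent U l -> tangent S (coll_line l).
Proof.
case=> l0 [v [Uv lv contact]]; split; first by rewrite coll_line_eq0.
have [v' Sv' sv] := U_collP Uv.
exists v'; split => //; first by apply/on_line_coll; exact: same_pt_on_line (same_pt_sym sv) lv.
move=> w Sw /on_line_coll lw; apply/same_pt_coll.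
exact: same_pt_trans (contact _ (proj2 (U_coll w) Sw) lw) sv.
Qed.

Lemma pedal_coll Q P : pedal U (coll Q) P ->
  exists2 P', same_pt P (coll P') &
    pedal S Q P' /\ forall l, on_line l P -> on_line (coll_line l) P'.
Proof.
case=> UP [l [tl lQ lP]]; have [P' SP' sP] := U_collP UP.
have on_l l' : on_line l' P -> on_line (coll_line l') P'.
  by move=> l'P; apply/on_line_coll; exact: same_pt_on_line (same_pt_sym sP) l'P.
exists P' => //; split=> //; split=> //.
by exists (coll_line l); split; [exact: tangent_coll | apply/on_line_coll | exact: on_l].
Qed.

Lemma is_arc_pedal_coll Q : is_arc (pedal S Q) -> is_arc (pedal U (coll Q)).
Proof.
move=> arc l u v w l0 /pedal_coll[u' su [Pu' Lu]] /pedal_coll[v' sv [Pv' Lv]].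
move=> /pedal_coll[w' sw [Pw' Lw]] lu lv lw.
have same x y x' y' :
    same_pt x (coll x') -> same_pt y (coll y') -> same_pt x' y' -> same_pt x y.
  by move=> sx sy /same_pt_coll sxy; exact: same_pt_trans sx (same_pt_trans sxy (same_pt_sym sy)).
have l0' : coll_line l != 0 by rewrite coll_line_eq0.
case: (arc _ _ _ _ l0' Pu' Pv' Pw' (Lu _ lu) (Lv _ lv) (Lw _ lw)) => s'.
- by constructor 1; exact: same su sv s'.
- by constructor 2; exact: same sv sw s'.
- by constructor 3; exact: same su sw s'.
Qed.

Lemma nondeg_conic_in_coll : nondeg_conic_in U -> nondeg_conic_in S.
Proof.
case=> M [M_sym M_det M_U]; pose N := A^T *m M *m A.
have N_sym : N^T = N by rewrite /N !trmx_mul trmxK M_sym mulmxA.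
exists (map_mx g N); split.
- by rewrite map_trmx N_sym.
- have A_det : \det A != 0 by rewrite -unitfE -unitmxE.
  have N_det : \det N != 0 by rewrite /N !det_mulmx det_tr !mulf_neq0.
  by apply: contraNneq N_det => /(congr1 s); rewrite -det_map_mx map_mx_gK rmorph0 => ->.
move=> w [w0 conic_w]; apply/U_coll/M_U; split; first by rewrite coll_eq0.
have -> : (coll w)^T *m M *m coll w = map_mx s (w^T *m map_mx g N *m w).
  by rewrite !map_mxM -map_trmx map_mx_gK /N /coll trmx_mul !mulmxA.
by rewrite conic_w map_mx0.
Qed.

Lemma coll_surj v : coll (map_mx g (invmx A *m v)) = v.
Proof. by rewrite /coll map_mx_gK mulKVmx. Qed.

End Collineation.

Theorem theorem2p9 (F : finFieldType) (q : nat) :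
  #|F| = (q ^ 2)%N -> odd q ->
  forall U : pset F, conicBM q U ->
  forall Q : 'cV[F]_3, Q != 0 -> ~ U Q -> zc Q != 0 ->
  is_arc (pedal U Q).
Proof.
move=> cardF q_odd U [[a [b [A [s [BMc A_unit A_linf U_BM]]]]] conic_U] Q _ _ zQ.
have [g _ gK] : bijective s := injF_bij (fmorph_inj s).
have BM_neq0 v : BMset q a b v -> v != 0 by case.
have BM_same := @BMset_same_pt _ q a b.
have b_Fq : b ^+ q = b.
  have [M [M_sym M_det M_BM]] := nondeg_conic_in_coll gK A_unit BM_neq0 BM_same U_BM conic_U.
  exact: conic_in_BM_inFq cardF q_odd BMc M_sym M_det M_BM.
have QE : coll A s (map_mx g (invmx A *m Q)) = Q := coll_surj gK A_unit Q.
rewrite -QE; apply: (is_arc_pedal_coll gK A_unit BM_neq0 BM_same U_BM).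
apply: (pedal_BM_arc cardF q_odd (BM_cond_a_neq0 cardF BMc b_Fq) b_Fq).
apply: contraNneq zQ => zQ'; rewrite -QE /coll; apply/eqP/A_linf.
by rewrite /zc mxE -/i2 zQ' rmorph0.
Qed.
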